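(* Let $S$ be a semigroup with involution, $\phi:S\to\mathbb{H}$ positive definite, and $\lambda$ the representation of $S$ on the quaternionic pre-Hilbert space $H_\phi$ defined below. Then $\phi$ is exponentially bounded (i.e. $\alpha$-bounded for some absolute value $\alpha$ on $S$) if and only if $\lambda(s)$ is a bounded operator on $H_\phi$ (with respect to the norm $\|f\|=\langle f,f\rangle^{1/2}$) for every $s\in S$.
   Context: $\mathbb{H}$ is the real quaternion algebra. A semigroup with involution is a set $S$ with an associative binary operation $\circ$ with neutral element $e$ and a bijection $s\mapsto s^*$ with $(s^* )^*=s$, $(s\circ t)^*=t^*\circ s^*$. $\phi:S\to\mathbb{H}$ is positive definite if $\sum_{i,j=1}^k \overline{q_i}\phi(s_i^*\circ s_j)q_j$ is a nonnegative real number for all $k$, $s_i\in S$, $q_i\in\mathbb{H}$. An absolute value on $S$ is $\alpha:S\to[0,\infty)$ with $\alpha(e)=1$, $\alpha(s\circ t)\le\alpha(s)\alpha(t)$, $\alpha(s^* )=\alpha(s)$; $\phi$ is $\alpha$-bounded if $|\phi(s)|\le C\alpha(s)$ for all $s$ and some $C>0$. For $s\in S$ let $\phi_s:S\to\mathbb{H}$, $\phi_s(t)=\phi(t^*\circ s)$. $H_\phi$ is the right $\mathbb{H}$-linear span (scalars acting pointwise from the right) of $\{\phi_s\}_{s\in S}$ inside $\mathbb{H}^S$, with the quaternionic inner product $\langle \sum_s\phi_sq_s,\sum_t\phi_tp_t\rangle=\sum_{s,t}\overline{p_t}\,\phi(t^*\circ s)\,q_s$ (finite sums). The representation $\lambda$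 is given by $\lambda(s)\big(\sum_t\phi_tq_t\big)=\sum_t\phi_{s\circ t}q_t$. *)

From HB Require Import structures.
From mathcomp Require Import all_boot all_order all_algebra.
From mathcomp Require Import reals.
Set Implicit Arguments. Unset Strict Implicit. Unset Printing Implicit Defensive.
Import Order.TTheory GRing.Theory Num.Theory.
Local Open Scope ring_scope.

Section Quat.
Variable R : realType.

Record quat := Quat { qre : R; qi : R; qj : R; qk : R }.

Definition qzero : quat := Quat 0 0 0 0.
Definition qadd (p q : quat) : quat :=
  Quat (qre p + qre q) (qi p + qi q) (qj p + qj q) (qk p + qk q).
(* Hamilton product: i^2 = j^2 = k^2 = ijk = -1 *)
Definition qmul (p q : quat) : quat :=
  Quat (qre p * qre q - qi p * qi q - qj p * qj q - qk p * qk q)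
       (qre p * qi q + qi p * qre q + qj p * qk q - qk p * qj q)
       (qre p * qj q - qi p * qk q + qj p * qre q + qk p * qi q)
       (qre p * qk q + qi p * qj q - qj p * qi q + qk p * qre q).
Definition qconj (q : quat) : quat := Quat (qre q) (- qi q) (- qj q) (- qk q).
Definition qabs (q : quat) : R :=
  Num.sqrt (qre q ^+ 2 + qi q ^+ 2 + qj q ^+ 2 + qk q ^+ 2).
Definition qnonneg_real (q : quat) : Prop :=
  [/\ 0 <= qre q, qi q = 0, qj q = 0 & qk q = 0].
End Quat.

Definition inv_semigroup (S : Type) (op : S -> S -> S) (e : S) (star : S -> S) : Prop :=
  [/\ (forall s t u, op s (op t u) = op (op s t) u),
      (forall s, op e s = s /\ op s e = s),
      (forall s, star (star s) = s)
    & (forall s t, star (op s t) = op (star t) (star s))].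

Section PD.
Variables (R : realType) (S : Type) (op : S -> S -> S) (e : S) (star : S -> S).

Definition pos_def (phi : S -> quat R) : Prop :=
  forall (k : nat) (s : 'I_k -> S) (q : 'I_k -> quat R),
    qnonneg_real (\big[@qadd R/qzero R]_(i < k) \big[@qadd R/qzero R]_(j < k)
                    qmul (qmul (qconj (q i)) (phi (op (star (s i)) (s j)))) (q j)).

Definition absolute_value (alpha : S -> R) : Prop :=
  [/\ (forall s, 0 <= alpha s), alpha e = 1,
      (forall s t, alpha (op s t) <= alpha s * alpha t)
    & (forall s, alpha (star s) = alpha s)].

Definition alpha_bounded (alpha : S -> R) (phi : S -> quat R) : Prop :=
  exists C : R, 0 < C /\ forall s, qabs (phi s) <= C * alpha s.

Definition exp_bounded (phi : S -> quat R) : Prop :=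
  exists alpha, absolute_value alpha /\ alpha_bounded alpha phi.

(* An element of H_phi is given by a finite right-linear combination
   sum_t phi_t q_t, encoded as a list of pairs (t, q_t). *)
Definition hrep := seq (S * quat R).

Definition phi_at (phi : S -> quat R) (s : S) : S -> quat R :=
  fun t => phi (op (star t) s).

Definition hfun (phi : S -> quat R) (c : hrep) : S -> quat R :=
  fun u => \big[@qadd R/qzero R]_(p <- c) qmul (phi_at phi p.1 u) p.2.

(* <sum_s phi_s q_s, sum_t phi_t p_t> = sum_{s,t} conj(p_t) phi(t^* o s) q_s *)
Definition hinner (phi : S -> quat R) (c d : hrep) : quat R :=
  \big[@qadd R/qzero R]_(a <- c) \big[@qadd R/qzero R]_(b <- d)
     qmul (qmul (qconj b.2) (phi (op (star b.1) a.1))) a.2.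

(* ||f|| = <f,f>^{1/2}; <f,f> is a nonnegative real, so take its real part *)
Definition hnorm (phi : S -> quat R) (c : hrep) : R := Num.sqrt (qre (hinner phi c c)).

(* lambda(s) (sum_t phi_t q_t) = sum_t phi_{s o t} q_t *)
Definition lambda (s : S) (c : hrep) : hrep := map (fun p => (op s p.1, p.2)) c.

Definition bounded_op (phi : S -> quat R) (T : hrep -> hrep) : Prop :=
  exists M : R, 0 <= M /\ forall c : hrep, hnorm phi (T c) <= M * hnorm phi c.
End PD.

From mathcomp Require Import all_boot all_order all_algebra.
From mathcomp Require Import reals.
From mathcomp Require Import ring lra.
From mathcomp Require Import classical_sets.
Set Implicit Arguments. Unset Strict Implicit. Unset Printing Implicit Defensive.
Import Order.TTheory GRing.Theory Num.Theory.
Local Open Scope ring_scope.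

(* Everything is done with the real part of the quaternionic inner product,
   a positive semidefinite symmetric real form on H_phi, for which
   Cauchy-Schwarz holds and lambda(s^* ) is the adjoint of lambda(s).

   If |phi| <= C alpha, each entry of the Gram matrix of lambda(u) f is at
   most C alpha(u)^2 times a product of weights, so ||lambda(u) f|| <= K_f alpha(u).
   Iterating ||lambda(t) f||^2 <= ||lambda(t^* t) f|| ||f|| gives
   ||lambda(t) f||^(2^n) ||f|| <= K_f (alpha(t) ||f||)^(2^n), and letting n grow
   removes K_f: ||lambda(t) f|| <= alpha(t) ||f||.

   Conversely the operator norms N(s) of the lambda(s) are submultiplicative
   and invariant under the involution, so max(N, 1) is an absolute value, and
   every component of phi(s) is an inner product <phi_s, phi_e u> with
   |u| = 1, bounded by N(s) ||phi_e||^2. *)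

Section Quaternion.
Variable R : realType.
Implicit Types p q : quat R.

Definition qone : quat R := Quat 1 0 0 0.

Definition qnorm2 q : R := qre q ^+ 2 + qi q ^+ 2 + qj q ^+ 2 + qk q ^+ 2.

Lemma qmul1q q : qmul qone q = q.
Proof. by case: q => a b c d; rewrite /qmul /=; congr Quat; ring. Qed.

Lemma qmulq1 q : qmul q qone = q.
Proof. by case: q => a b c d; rewrite /qmul /=; congr Quat; ring. Qed.

Lemma qaddq0 q : qadd q (qzero R) = q.
Proof. by case: q => a b c d; rewrite /qadd /= !addr0. Qed.

Lemma qconj_one : qconj qone = qone.
Proof. by rewrite /qconj /= oppr0. Qed.

Lemma qnorm2_ge0 q : 0 <= qnorm2 q.
Proof. by case: q => a b c d; rewrite /qnorm2 /=; nra. Qed.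

Lemma qnorm2M p q : qnorm2 (qmul p q) = qnorm2 p * qnorm2 q.
Proof. by case: p => a b c d; case: q => a' b' c' d'; rewrite /qnorm2 /=; ring. Qed.

Lemma qnorm2_conj q : qnorm2 (qconj q) = qnorm2 q.
Proof. by case: q => a b c d; rewrite /qnorm2 /=; ring. Qed.

Lemma qabs_ge0 q : 0 <= qabs q.
Proof. exact: sqrtr_ge0. Qed.

Lemma qabsM p q : qabs (qmul p q) = qabs p * qabs q.
Proof. by rewrite /qabs -!/(qnorm2 _) qnorm2M sqrtrM ?qnorm2_ge0. Qed.

Lemma qabs_conj q : qabs (qconj q) = qabs q.
Proof. by rewrite /qabs -!/(qnorm2 _) qnorm2_conj. Qed.

Lemma qre_le_qabs q : qre q <= qabs q.
Proof.
rewrite /qabs -/(qnorm2 _); apply: le_trans (ler_norm _) _.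
rewrite -sqrtr_sqr ler_sqrt ?qnorm2_ge0 //.
by case: q => a b c d; rewrite /qnorm2 /=; nra.
Qed.

Lemma qabs_le_sum_norm q : qabs q <= `|qre q| + `|qi q| + `|qj q| + `|qk q|.
Proof.
have sum_ge0 : 0 <= `|qre q| + `|qi q| + `|qj q| + `|qk q| by rewrite !addr_ge0.
rewrite /qabs -(ger0_norm sum_ge0) -sqrtr_sqr ler_sqrt ?sqr_ge0 //.
rewrite -[qre q ^+ 2]real_normK ?num_real // -[qi q ^+ 2]real_normK ?num_real //.
rewrite -[qj q ^+ 2]real_normK ?num_real // -[qk q ^+ 2]real_normK ?num_real //.
have := normr_ge0 (qre q); have := normr_ge0 (qi q).
have := normr_ge0 (qj q); have := normr_ge0 (qk q); nra.
Qed.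

Lemma qre_sum (I : Type) (r : seq I) (P : pred I) (F : I -> quat R) :
  qre (\big[@qadd R/qzero R]_(i <- r | P i) F i) = \sum_(i <- r | P i) qre (F i).
Proof. by elim: r => [|a r IH]; rewrite ?big_nil // !big_cons; case: (P a); rewrite /= IH. Qed.

End Quaternion.

Section RealFacts.
Variable R : realType.

Lemma bernoulli_ineq (h : R) n : 0 <= h -> 1 + n%:R * h <= (1 + h) ^+ n.
Proof.
move=> h_ge0; elim: n => [|n IH]; first by rewrite mul0r addr0 expr0.
have pow_ge0 : 0 <= (1 + h) ^+ n by rewrite exprn_ge0 // addr_ge0.
have n_ge0 : 0 <= n%:R :> R by exact: ler0n.
by rewrite exprS -natr1; nra.
Qed.

Lemma le_of_pow_bounded (x y b D : R) : 0 <= x -> 0 < y -> 0 <= b ->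
  (forall n, exists2 m, (n <= m)%N & x ^+ m * y <= D * b ^+ m) -> x <= b.
Proof.
move=> x_ge0 y_gt0 b_ge0 hpow; rewrite leNgt; apply/negP => b_lt_x.
have b_gt0 : 0 < b.
  rewrite lt_def b_ge0 andbT; apply/eqP => b0; rewrite b0 in b_lt_x.
  have [m m_gt0 hm] := hpow 1%N; move: hm; rewrite b0 expr0n gtn_eqF // mulr0.
  by rewrite leNgt mulr_gt0 ?exprn_gt0.
set r := x / b.
have r_gt1 : 1 < r by rewrite ltr_pdivlMr // mul1r.
have r_pow m : x ^+ m * y <= D * b ^+ m -> r ^+ m * y <= D.
  by move=> hm; rewrite -(ler_pM2r (exprn_gt0 m b_gt0)) mulrAC -exprMn /r divfK ?gt_eqF.
have ry_gt0 : 0 < (r - 1) * y by rewrite mulr_gt0 // subr_gt0.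
set z := `|D| / ((r - 1) * y).
have [m n_le_m hm] := hpow (Num.Def.archi_bound z).
have z_lt_m : z < m%:R.
  have z_ge0 : 0 <= z by rewrite divr_ge0 // ltW.
  by apply: lt_le_trans (archi_boundP z_ge0) _; rewrite ler_nat.
have D_lt : `|D| < m%:R * ((r - 1) * y) by rewrite -ltr_pdivrMr.
have bern : (1 + m%:R * (r - 1)) * y <= r ^+ m * y.
  have := @bernoulli_ineq (r - 1) m; rewrite [1 + (r - 1)]addrC subrK.
  by rewrite ler_pM2r // => ->; rewrite // subr_ge0 ltW.
have := r_pow m hm; have := ler_norm D; nra.
Qed.

Lemma quadratic_nonneg_discr (P Q X : R) : 0 <= Q ->
  (forall t, 0 <= P + 2 * t * X + t ^+ 2 * Q) -> X ^+ 2 <= P * Q.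
Proof.
move=> Q_ge0 hquad; have [Q_gt0|] := ltrP 0 Q.
  have tQ : (- X / Q) * Q = - X by rewrite mulfVK // gt_eqF.
  have := hquad (- X / Q); set t := - X / Q => ht.
  have : 0 <= P * Q + 2 * X * (t * Q) + (t * Q) ^+ 2.
    have -> : P * Q + 2 * X * (t * Q) + (t * Q) ^+ 2
            = (P + 2 * t * X + t ^+ 2 * Q) * Q by ring.
    by rewrite mulr_ge0 // ltW.
  by rewrite tQ; nra.
move=> Q_le0; have Q0 : Q = 0 by apply/eqP; rewrite eq_le Q_le0 Q_ge0.
rewrite Q0 in hquad *.
have [-> | X_neq0] := eqVneq X 0; first by rewrite expr0n mulr0.
have := hquad (- (P + 1) / (2 * X)).
have -> : 2 * (- (P + 1) / (2 * X)) * X = - (P + 1) by field; rewrite X_neq0.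
lra.
Qed.

End RealFacts.

Section InvSemigroup.
Variables (S : Type) (op : S -> S -> S) (e : S) (star : S -> S).
Hypothesis HS : inv_semigroup op e star.

Lemma opA : associative op. Proof. by case: HS. Qed.
Lemma op1s : left_id e op. Proof. by case: HS => _ h _ _ s; case: (h s). Qed.
Lemma ops1 : right_id e op. Proof. by case: HS => _ h _ _ s; case: (h s). Qed.
Lemma starK : involutive star. Proof. by case: HS. Qed.
Lemma star_op s t : star (op s t) = op (star t) (star s). Proof. by case: HS. Qed.

Lemma star_unit : star e = e.
Proof. by rewrite -{2}(starK e) -{2}(ops1 (star e)) star_op starK ops1. Qed.

Lemma lambda_op (R : realType) s t (c : hrep R S) :
  lambda op s (lambda op t c) = lambda op (op s t) c.
Proof. by rewrite /lambda -map_comp; apply: eq_map => p /=; rewrite opA. Qed.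

Lemma lambda_unit (R : realType) (c : hrep R S) : lambda op e c = c.
Proof. by rewrite /lambda -[RHS]map_id; apply: eq_map => -[s q] /=; rewrite op1s. Qed.

End InvSemigroup.

Lemma absolute_value_max1 (R : realType) (S : Type) (op : S -> S -> S) (e : S)
    (star : S -> S) (N : S -> R) :
  (forall s, 0 <= N s) -> N e <= 1 -> (forall s t, N (op s t) <= N s * N t) ->
  (forall s, N (star s) = N s) -> absolute_value op e star (fun s => Num.max (N s) 1).
Proof.
move=> N_ge0 Ne_le1 N_op N_star; split => [s|||s]; rewrite ?N_star //.
- by rewrite le_max ler01 orbT.
- exact: max_r.
move=> s t; have ge1 u : 1 <= Num.max (N u) 1 by rewrite le_max lexx orbT.
rewrite ge_max mulr_ege1 ?ge1 // andbT; apply: le_trans (N_op s t) _.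
by rewrite ler_pM ?N_ge0 // le_max lexx.
Qed.

Section RealForm.
Variables (R : realType) (S : Type) (op : S -> S -> S) (e : S) (star : S -> S)
  (phi : S -> quat R).
Hypothesis HS : inv_semigroup op e star.
Hypothesis Hpd : pos_def op star phi.

Local Notation hn := (hnorm op star phi).

Definition hdot_term (a b : S * quat R) : R :=
  qre (qmul (qmul (qconj b.2) (phi (op (star b.1) a.1))) a.2).

Definition hdot (c d : hrep R S) : R := qre (hinner op star phi c d).

Definition hscale (r : R) (c : hrep R S) : hrep R S :=
  map (fun p => (p.1, qmul p.2 (Quat r 0 0 0))) c.

Lemma hdotE c d : hdot c d = \sum_(a <- c) \sum_(b <- d) hdot_term a b.
Proof. by rewrite /hdot /hinner qre_sum; apply: eq_bigr => a _; rewrite qre_sum. Qed.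

Lemma hdot_catl c c' d : hdot (c ++ c') d = hdot c d + hdot c' d.
Proof. by rewrite !hdotE big_cat. Qed.

Lemma hdot_catr c d d' : hdot c (d ++ d') = hdot c d + hdot c d'.
Proof. by rewrite !hdotE -big_split; apply: eq_bigr => a _; rewrite big_cat. Qed.

Lemma hdot_scalel r c d : hdot (hscale r c) d = r * hdot c d.
Proof.
rewrite !hdotE big_map mulr_sumr; apply: eq_bigr => a _; rewrite mulr_sumr.
apply: eq_bigr => b _; rewrite /hdot_term /=.
by case: (phi _) => ? ? ? ?; case: b.2 => ? ? ? ?; case: a.2 => ? ? ? ? /=; ring.
Qed.

Lemma hdot_scaler r c d : hdot c (hscale r d) = r * hdot c d.
Proof.
rewrite !hdotE mulr_sumr; apply: eq_bigr => a _; rewrite big_map mulr_sumr.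
apply: eq_bigr => b _; rewrite /hdot_term /=.
by case: (phi _) => ? ? ? ?; case: b.2 => ? ? ? ?; case: a.2 => ? ? ? ? /=; ring.
Qed.

Lemma phi_star_op_real s : qnonneg_real (phi (op (star s) s)).
Proof.
have := Hpd (fun _ : 'I_1 => s) (fun _ => qone R).
by rewrite !big_ord_recl !big_ord0 !qaddq0 qconj_one qmul1q qmulq1.
Qed.

Lemma phi_star s : phi (star s) = qconj (phi s).
Proof.
have [_ he1 he2 he3] := phi_star_op_real e; rewrite (star_unit HS) (op1s HS) in he1 he2 he3.
have [_ hs1 hs2 hs3] := phi_star_op_real s.
(* positivity on the vectors phi_e + phi_s and phi_e + phi_s i *)
have pd2 u := Hpd (fun i : 'I_2 => if val i == 0%N then e else s)
                  (fun i : 'I_2 => if val i == 0%N then qone R else u).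
have := pd2 (qone R); have := pd2 (Quat 0 1 0 0).
rewrite !big_ord_recl !big_ord0 /= (star_unit HS) !(op1s HS) !(ops1 HS).
move: he1 he2 he3 hs1 hs2 hs3; rewrite /qconj /=.
case: (phi e) => ? ? ? ?; case: (phi (op (star s) s)) => ? ? ? ?.
case: (phi s) => c1 c2 c3 c4; case: (phi (star s)) => d1 d2 d3 d4 /=.
move=> -> -> -> -> -> -> [_ /= h1 h2 h3] [_ /= g1 g2 g3].
by congr Quat; lra.
Qed.

Lemma hdot_termC a b : hdot_term a b = hdot_term b a.
Proof.
rewrite /hdot_term -[op (star a.1) b.1](starK HS) (star_op HS) (starK HS) phi_star.
by case: (phi _) => ? ? ? ?; case: b.2 => ? ? ? ?; case: a.2 => ? ? ? ? /=; ring.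
Qed.

Lemma hdotC c d : hdot c d = hdot d c.
Proof. by rewrite !hdotE exchange_big; apply: eq_bigr => a _; apply: eq_bigr => b _; apply: hdot_termC. Qed.

Lemma hdot_ge0 c : 0 <= hdot c c.
Proof.
pose x0 := (e, qzero R); pose s (i : 'I_(size c)) := (nth x0 c i).1.
pose q (i : 'I_(size c)) := (nth x0 c i).2.
have [pos _ _ _] := Hpd s q; rewrite qre_sum in pos; apply: le_trans pos _.
have -> : hdot c c = \sum_(j < size c) \sum_(i < size c)
                       hdot_term (nth x0 c j) (nth x0 c i).
  rewrite hdotE (big_nth x0) big_mkord.
  by apply: eq_bigr => j _; rewrite (big_nth x0) big_mkord.
by rewrite exchange_big; apply: ler_sum => i _; rewrite qre_sum.
Qed.

Lemma hnorm_ge0 c : 0 <= hn c.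
Proof. exact: sqrtr_ge0. Qed.

Lemma hnorm_sqr c : hn c ^+ 2 = hdot c c.
Proof. by rewrite sqr_sqrtr // hdot_ge0. Qed.

Lemma hdot_cat_scale c d t :
  hdot (c ++ hscale t d) (c ++ hscale t d) = hdot c c + 2 * t * hdot c d + t ^+ 2 * hdot d d.
Proof. by rewrite !hdot_catl !hdot_catr !hdot_scalel !hdot_scaler (hdotC d c); ring. Qed.

Lemma hdot_Cauchy_Schwarz c d : `|hdot c d| <= hn c * hn d.
Proof.
rewrite -sqrtr_sqr -sqrtrM ?hdot_ge0 // ler_sqrt ?mulr_ge0 ?hdot_ge0 //.
apply: quadratic_nonneg_discr; first exact: hdot_ge0.
by move=> t; rewrite -hdot_cat_scale hdot_ge0.
Qed.

Lemma hdot_lambda s c d : hdot (lambda op s c) d = hdot c (lambda op (star s) d).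
Proof.
rewrite !hdotE big_map; apply: eq_bigr => a _; rewrite big_map.
by apply: eq_bigr => b _; rewrite /hdot_term /= (star_op HS) (starK HS) (opA HS).
Qed.

Lemma hnorm_lambda_sqr_le t c :
  hn (lambda op t c) ^+ 2 <= hn (lambda op (op (star t) t) c) * hn c.
Proof.
rewrite hnorm_sqr hdot_lambda (lambda_op HS); apply: le_trans (ler_norm _) _.
by rewrite mulrC hdot_Cauchy_Schwarz.
Qed.

Lemma hdot_unit_unit u : hdot [:: (e, u)] [:: (e, u)] = qnorm2 u * qre (phi e).
Proof.
have [_] := phi_star_op_real e; rewrite (star_unit HS) (op1s HS).
rewrite hdotE !big_seq1 /hdot_term /= (star_unit HS) (op1s HS) /qnorm2.
by case: (phi e) => ? ? ? ? /= -> -> ->; case: u => ? ? ? ? /=; ring.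
Qed.

Lemma hdot_point_unit s u : hdot [:: (s, qone R)] [:: (e, u)] = qre (qmul (qconj u) (phi s)).
Proof.
rewrite hdotE !big_seq1 /hdot_term /= (star_unit HS) (op1s HS).
by case: (phi s) => ? ? ? ?; case: u => ? ? ? ? /=; ring.
Qed.

Lemma qabs_phi_le s : qabs (phi s) <= 4 * (hn [:: (s, qone R)] * hn [:: (e, qone R)]).
Proof.
have comp u : qnorm2 u = 1 ->
    `|qre (qmul (qconj u) (phi s))| <= hn [:: (s, qone R)] * hn [:: (e, qone R)].
  move=> u1; rewrite -hdot_point_unit; apply: le_trans (hdot_Cauchy_Schwarz _ _) _.
  by rewrite /hnorm -!/(hdot _ _) !hdot_unit_unit u1 /qnorm2 /= expr1n !expr0n !addr0.
have := comp (qone R); have := comp (Quat 0 1 0 0).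
have := comp (Quat 0 0 1 0); have := comp (Quat 0 0 0 1).
rewrite /qnorm2 /= expr1n !expr0n /= ?addr0 ?add0r.
have := qabs_le_sum_norm (phi s); case: (phi s) => a1 a2 a3 a4 /=.
have -> : 1 * a1 - - 0 * a2 - - 0 * a3 - - 0 * a4 = a1 by ring.
have -> : 0 * a1 - -1 * a2 - - 0 * a3 - - 0 * a4 = a2 by ring.
have -> : 0 * a1 - - 0 * a2 - -1 * a3 - - 0 * a4 = a3 by ring.
have -> : 0 * a1 - - 0 * a2 - - 0 * a3 - -1 * a4 = a4 by ring.
by move=> hsum h4 h3 h2 h1; lra.
Qed.

Section AlphaBounded.
Variables (alpha : S -> R) (C : R).
Hypothesis Halpha : absolute_value op e star alpha.
Hypothesis C_gt0 : 0 < C.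
Hypothesis phi_le : forall s, qabs (phi s) <= C * alpha s.

Let alpha_ge0 s : 0 <= alpha s. Proof. by case: Halpha. Qed.
Let alpha_op s t : alpha (op s t) <= alpha s * alpha t. Proof. by case: Halpha. Qed.
Let alpha_star s : alpha (star s) = alpha s. Proof. by case: Halpha. Qed.

Definition weight (c : hrep R S) : R := \sum_(a <- c) qabs a.2 * alpha a.1.

Lemma weight_ge0 c : 0 <= weight c.
Proof. by apply: sumr_ge0 => a _; rewrite mulr_ge0 ?qabs_ge0. Qed.

Lemma alpha_star_op_le u s t :
  alpha (op (star (op u s)) (op u t)) <= alpha u ^+ 2 * (alpha s * alpha t).
Proof.
apply: le_trans (alpha_op _ _) _; rewrite alpha_star.
have -> : alpha u ^+ 2 * (alpha s * alpha t) = (alpha u * alpha s) * (alpha u * alpha t).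
  by ring.
by rewrite ler_pM.
Qed.

Lemma hnorm_lambda_sqr_le_weight u c :
  hn (lambda op u c) ^+ 2 <= C * alpha u ^+ 2 * weight c ^+ 2.
Proof.
rewrite hnorm_sqr hdotE big_map (_ : weight c ^+ 2 = weight c * weight c) //.
rewrite {1}/weight mulr_suml mulr_sumr; apply: ler_sum => a _.
rewrite big_map /weight mulr_sumr mulr_sumr; apply: ler_sum => b _.
rewrite /hdot_term.
apply: le_trans (qre_le_qabs _) _; rewrite !qabsM qabs_conj /=.
have hphi : qabs (phi (op (star (op u b.1)) (op u a.1)))
            <= C * (alpha u ^+ 2 * (alpha b.1 * alpha a.1)).
  exact: le_trans (phi_le _) (ler_wpM2l (ltW C_gt0) (alpha_star_op_le _ _ _)).
apply: le_trans (ler_wpM2r (qabs_ge0 _) (ler_wpM2l (qabs_ge0 _) hphi)) _.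
by rewrite le_eqVlt; apply/orP; left; apply/eqP; ring.
Qed.

Lemma hnorm_lambda_le_weight u c :
  hn (lambda op u c) <= Num.sqrt C * weight c * alpha u.
Proof.
rewrite -ler_sqr ?nnegrE ?hnorm_ge0 ?mulr_ge0 ?sqrtr_ge0 ?weight_ge0 //.
apply: le_trans (hnorm_lambda_sqr_le_weight u c) _.
by rewrite !exprMn sqr_sqrtr ?(ltW C_gt0) // le_eqVlt; apply/orP; left; apply/eqP; ring.
Qed.

Lemma hnorm_lambda_pow2_le c n t :
  hn (lambda op t c) ^+ (2 ^ n) * hn c
    <= Num.sqrt C * weight c * (alpha t * hn c) ^+ (2 ^ n).
Proof.
elim: n t => [|n IH] t.
  by rewrite expn0 !expr1 mulrA ler_wpM2r ?hnorm_ge0 ?hnorm_lambda_le_weight.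
set K := Num.sqrt C * weight c; set m := (2 ^ n)%N.
set x' := hn (lambda op (op (star t) t) c); set y := hn c.
have K_ge0 : 0 <= K by rewrite mulr_ge0 ?sqrtr_ge0 ?weight_ge0.
have y_ge0 : 0 <= y by exact: hnorm_ge0.
have alpha2 : alpha (op (star t) t) <= alpha t ^+ 2.
  by apply: le_trans (alpha_op _ _) _; rewrite alpha_star expr2.
rewrite expnS !exprM -/m.
apply: (@le_trans _ _ ((x' * y) ^+ m * y)).
  rewrite ler_wpM2r // lerXn2r ?nnegrE ?exprn_ge0 ?mulr_ge0 ?hnorm_ge0 //.
  exact: hnorm_lambda_sqr_le.
rewrite exprMn mulrAC; apply: le_trans (ler_wpM2r (exprn_ge0 m y_ge0) (IH _)) _.
rewrite -/K -mulrA -exprMn ler_wpM2l // lerXn2r ?nnegrE ?mulr_ge0 ?sqr_ge0 //.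
by rewrite -/y exprMn -mulrA -expr2 ler_wpM2r ?sqr_ge0.
Qed.

Lemma hnorm_lambda_le_alpha t c : hn (lambda op t c) <= alpha t * hn c.
Proof.
have [c0 | c_neq0] := eqVneq (hn c) 0.
  have := hnorm_lambda_sqr_le t c; rewrite c0 !mulr0 => sq.
  by rewrite -ler_sqr ?nnegrE ?hnorm_ge0 // expr0n.
apply: (@le_of_pow_bounded _ _ (hn c) _ (Num.sqrt C * weight c)).
- exact: hnorm_ge0.
- by rewrite lt_def c_neq0 hnorm_ge0.
- by rewrite mulr_ge0 ?hnorm_ge0.
move=> n; exists (2 ^ n)%N; first exact/ltnW/ltn_expl.
exact: hnorm_lambda_pow2_le.
Qed.

End AlphaBounded.

Section BoundedLambda.
Hypothesis lambda_bounded : forall s, bounded_op op star phi (lambda op s).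

Definition opnorm s : R :=
  inf [set M | 0 <= M /\ forall c, hn (lambda op s c) <= M * hn c].

Lemma opnorm_le s M : 0 <= M -> (forall c, hn (lambda op s c) <= M * hn c) -> opnorm s <= M.
Proof. by move=> M_ge0 hM; apply: ge_inf; [exists 0 => N [] | split]. Qed.

Lemma opnorm_ge0 s : 0 <= opnorm s.
Proof. by apply: lb_le_inf => [|N [] //]; have [M hM] := lambda_bounded s; exists M. Qed.

Lemma hnorm_lambda_le_opnorm s c : hn (lambda op s c) <= opnorm s * hn c.
Proof.
have [M [M_ge0 hM]] := lambda_bounded s.
have [c0 | c_neq0] := eqVneq (hn c) 0; first by have := hM c; rewrite c0 !mulr0.
have c_gt0 : 0 < hn c by rewrite lt_def c_neq0 hnorm_ge0.
rewrite -ler_pdivrMr //; apply: lb_le_inf => [|N [_ hN]]; first by exists M.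
by rewrite ler_pdivrMr.
Qed.

Lemma opnorm_op s t : opnorm (op s t) <= opnorm s * opnorm t.
Proof.
apply: opnorm_le => [|c]; first by rewrite mulr_ge0 ?opnorm_ge0.
rewrite -(lambda_op HS) -mulrA; apply: le_trans (hnorm_lambda_le_opnorm _ _) _.
by rewrite ler_wpM2l ?opnorm_ge0 ?hnorm_lambda_le_opnorm.
Qed.

Lemma opnorm_star_le s : opnorm (star s) <= opnorm s.
Proof.
apply: opnorm_le => [|c]; first exact: opnorm_ge0.
set y := lambda op (star s) c.
have y_sqr : hn y ^+ 2 <= opnorm s * hn c * hn y.
  rewrite hnorm_sqr {1}/y hdot_lambda (starK HS).
  apply: le_trans (ler_norm _) _; apply: le_trans (hdot_Cauchy_Schwarz _ _) _.
  by rewrite [opnorm s * _]mulrC -mulrA ler_wpM2l ?hnorm_ge0 ?hnorm_lambda_le_opnorm.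
have [y_gt0 | y_le0] := ltrP 0 (hn y); first by rewrite -(ler_pM2r y_gt0) -expr2.
by apply: le_trans y_le0 _; rewrite mulr_ge0 ?opnorm_ge0 ?hnorm_ge0.
Qed.

Lemma opnorm_star s : opnorm (star s) = opnorm s.
Proof.
apply/eqP; rewrite eq_le opnorm_star_le /=.
by rewrite -{1}[s](starK HS) opnorm_star_le.
Qed.

Lemma opnorm_unit_le1 : opnorm e <= 1.
Proof. by apply: opnorm_le => // c; rewrite (lambda_unit HS) mul1r. Qed.

Lemma exp_bounded_of_bounded_lambda : exp_bounded op e star phi.
Proof.
(* [opnorm e] is 0 when H_phi is trivial, whence the max with 1. *)
pose alpha s := Num.max (opnorm s) 1.
have alpha_abs : absolute_value op e star alpha.
  exact: absolute_value_max1 opnorm_ge0 opnorm_unit_le1 opnorm_op opnorm_star.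
exists alpha; split => //; set h := hn [:: (e, qone R)].
exists (4 * h ^+ 2 + 1); split => [|s]; first by have := sqr_ge0 h; lra.
have hs : hn [:: (s, qone R)] <= opnorm s * h.
  have -> : [:: (s, qone R)] = lambda op s [:: (e, qone R)] by rewrite /lambda /= (ops1 HS).
  exact: hnorm_lambda_le_opnorm.
apply: le_trans (qabs_phi_le s) _; rewrite -/h.
have N_le_alpha : opnorm s <= alpha s by rewrite le_max lexx.
have := opnorm_ge0 s; have := hnorm_ge0 [:: (s, qone R)]; have := hnorm_ge0 [:: (e, qone R)].
rewrite -/h; nra.
Qed.

End BoundedLambda.

End RealForm.

Theorem mainTheorem5 (R : realType) (S : Type) (op : S -> S -> S) (e : S)
  (star : S -> S) (phi : S -> quat R)
  (HS : inv_semigroup op e star) (Hpd : pos_def op star phi) :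
  exp_bounded op e star phi <-> (forall s : S, bounded_op op star phi (lambda op s)).
Proof.
split=> [[alpha [Halpha [C [C_gt0 phi_le]]]] s | lambda_bounded].
  exists (alpha s); split; first by case: Halpha.
  exact: (hnorm_lambda_le_alpha HS Hpd Halpha C_gt0 phi_le s).
exact: exp_bounded_of_bounded_lambda HS Hpd lambda_bounded.
Qed.
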